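(* Let $m\ge 2$, let $J\subseteq\{1,\dots,m\}$ with $|J|\ge 2$, and let $i,j$ be distinct elements of $J$. Then the matrix $\mathrm{diag}(\theta_{ij}(J),1,1,\dots)\in \mathrm{GL}_\infty(\mathbb S_m)$ belongs to $E_\infty(\mathbb S_m)$. Equivalently (with $n=m+1$ and the identification below), for every $J\subseteq\{1,\dots,n\}$ with $n\in J$, $|J|\ge3$, and distinct $i,j\in J\setminus\{n\}$, the unit $\theta_{ij}(J)\in(1+\mathfrak p_n)^*=\mathrm{GL}_\infty(\mathbb S_{n-1})$ lies in $E_\infty(\mathbb S_{n-1})$.
   Context: $K$ is a field. For $n\ge1$, $\mathbb S_n$ is the $K$-algebra generated by $x_1,\dots,x_n,y_1,\dots,y_n$ subject to $y_ix_i=1$ for all $i$ and $[x_i,y_j]=[x_i,x_j]=[y_i,y_j]=0$ for $i\ne j$. For $i\in\{1,\dots,n\}$ and $s,t\in\mathbb N$ put $E_{st}(i):=x_i^sy_i^t-x_i^{s+1}y_i^{t+1}$ (these satisfy $E_{st}(i)E_{uv}(i)=\delta_{tu}E_{sv}(i)$), $e_i:=E_{00}(i)=1-x_iy_i$, and $e_I:=\prod_{i\in I}e_i$ for $I\subseteq\{1,\dots,n\}$. For $J\subseteq\{1,\dots,n\}$ with $|J|\ge2$ and distinct $i,j\in J$, $\theta_{ij}(J):=(1+(y_i-1)e_{J\setminus\{i\}})(1+(x_j-1)e_{J\setminus\{j\}})$; it is a unit of $\mathbb S_n$. $\mathfrak p_n$ denotes the ideal of $\mathbb S_n$ generated by $e_n$,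 and $(1+\mathfrak p_n)^*$ the group of units of $\mathbb S_n$ lying in $1+\mathfrak p_n$. $\mathbb S_{n-1}$ is identified with the subalgebra of $\mathbb S_n$ generated by $x_1,\dots,x_{n-1},y_1,\dots,y_{n-1}$, and $\mathrm{GL}_\infty(\mathbb S_{n-1})$ is identified with $(1+\mathfrak p_n)^*$ via the group isomorphism $(a_{kl})\mapsto 1+\sum_{k,l}(a_{kl}-\delta_{kl})E_{kl}(n)$. For a ring $A$, $\mathrm{GL}_\infty(A)$ and $E_\infty(A)$ are the stable general linear group and its subgroup generated by elementary matrices $1+aE_{kl}$ ($a\in A$, $k\neq l$). *)

From HB Require Import structures.
From mathcomp Require Import all_boot all_order all_algebra.
Set Implicit Arguments. Unset Strict Implicit. Unset Printing Implicit Defensive.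
Import GRing.Theory.
Local Open Scope ring_scope.

(* Indices {1,...,m} are represented by 'I_m. *)

Definition jacobson_rel (A : nzRingType) (m : nat) (x y : 'I_m -> A) : Prop :=
  (forall i, y i * x i = 1) /\
  (forall i j, i != j ->
     [/\ x i * y j = y j * x i, x i * x j = x j * x i & y i * y j = y j * y i]).

Definition is_alg_hom (K : fieldType) (A B : algType K) (f : A -> B) : Prop :=
  [/\ forall a b, f (a + b) = f a + f b,
      forall a b, f (a * b) = f a * f b,
      f 1 = 1 &
      forall (k : K) a, f (k *: a) = k *: f a].

(* (A, x, y) is THE K-algebra generated by x_i, y_i subject to the relations,
   i.e. it satisfies the relations and is initial among such data
   (universal property of the presentation); hence A is isomorphic to S_m. *)
Definition is_jacobson_algebra (K : fieldType) (m : nat) (A : algType K)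
    (x y : 'I_m -> A) : Prop :=
  jacobson_rel x y /\
  forall (B : algType K) (xb yb : 'I_m -> B), jacobson_rel xb yb ->
    exists f : A -> B,
      [/\ is_alg_hom f,
          (forall i, f (x i) = xb i /\ f (y i) = yb i) &
          forall g : A -> B, is_alg_hom g ->
            (forall i, g (x i) = xb i /\ g (y i) = yb i) -> forall a, g a = f a].

(* e_i = 1 - x_i y_i and e_I = prod_{i in I} e_i (the e_i commute). *)
Definition jac_e (A : nzRingType) m (x y : 'I_m -> A) (i : 'I_m) : A :=
  1 - x i * y i.
Definition jac_eI (A : nzRingType) m (x y : 'I_m -> A) (I : {set 'I_m}) : A :=
  \prod_(i in I) jac_e x y i.

Definition theta (A : nzRingType) m (x y : 'I_m -> A) (J : {set 'I_m})
    (i j : 'I_m) : A :=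
  (1 + (y i - 1) * jac_eI x y (J :\ i)) * (1 + (x j - 1) * jac_eI x y (J :\ j)).

Definition elem_mx (A : nzRingType) N (k l : 'I_N) (a : A) : 'M[A]_N :=
  \matrix_(p, q) ((p == q)%:R + (if (p == k) && (q == l) then a else 0)).

(* E_N(A): the subgroup of GL_N(A) generated by elementary matrices 1 + a E_kl,
   k <> l (closed under inverses, so = finite products of such matrices). *)
Definition in_E (A : nzRingType) N (M : 'M[A]_N) : Prop :=
  exists s : seq ('I_N * 'I_N * A),
    all (fun t => t.1.1 != t.1.2) s /\
    M = foldr (fun t acc => elem_mx t.1.1 t.1.2 t.2 *m acc) 1%:M s.

Definition diag1 (A : nzRingType) N (a : A) : 'M[A]_N.+1 :=
  \matrix_(p, q) (if p == q then (if p == ord0 then a else 1) else 0).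

(* diag(a,1,1,...) in GL_oo(A) lies in E_oo(A) = union of the E_N(A). *)
Definition diag_in_Einf (A : nzRingType) (a : A) : Prop :=
  exists N : nat, in_E (diag1 N a).

(* Let p = e_{J \ {i,j}}: an idempotent commuting with x_i, y_i, x_j, y_j.
   The map r |-> 1 - p + p r is multiplicative on the centraliser of p, so
   X_k = 1 - p + p x_k and Y_k = 1 - p + p y_k (k = i, j) again satisfy
   Y_k X_k = 1 and the commutation relations, while 1 - X_k Y_k = p e_k.
   Hence theta_ij(J) = (1 + (Y_i - 1)(1 - X_j Y_j)) (1 + (X_j - 1)(1 - X_i Y_i))
   = X_j X_i Y_j Y_i + (1 - X_j Y_j) Y_i + X_j (1 - X_i Y_i).  The latter
   expression, for any two pairs with b_k a_k = 1, is the corner of the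
   commutator of two explicit invertible 3x3 matrices, and by Whitehead's
   lemma diag(C, 1) lies in E_6 for every commutator C. *)

From HB Require Import structures.
From mathcomp Require Import all_boot all_order all_algebra.
Set Implicit Arguments. Unset Strict Implicit. Unset Printing Implicit Defensive.
Import GRing.Theory.
Local Open Scope ring_scope.

Lemma prodr_setD1_comm (R : nzRingType) (T : finType) (S : {set T}) k (F : T -> R) :
  k \in S -> (forall t, GRing.comm (F k) (F t)) ->
  \prod_(t in S) F t = \prod_(t in S :\ k) F t * F k.
Proof.
move=> kS cF.
pose G t := if t == k then 1 else F t; pose H t := if t == k then F k else 1.
have -> : \prod_(t in S) F t = \prod_(t in S) (G t * H t).
  by apply: eq_bigr => t _; rewrite /G /H; case: eqP => [->|]; rewrite ?mul1r ?mulr1.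
rewrite prodrM_comm; last first.
  move=> t u _ _; rewrite /G /H.
  by case: eqP; case: eqP => // *; [exact/commr_sym/commr1 | exact/commr_sym | exact: commr1].
congr (_ * _).
  rewrite big_mkcond [RHS]big_mkcond; apply: eq_bigr => t _.
  by rewrite /G in_setD1; case: eqP; case: (t \in S).
rewrite -big_mkcondr (big_pred1 k) // => t.
by rewrite /= andbC; case: eqP => // ->.
Qed.

Section Isometry.
Variables (R : nzRingType) (a b : R).
Hypothesis ba : b * a = 1.

Lemma isometry_complMl : (1 - a * b) * a = 0.
Proof. by rewrite mulrBl mul1r -mulrA ba mulr1 subrr. Qed.

Lemma isometry_complMr : b * (1 - a * b) = 0.
Proof. by rewrite mulrBr mulr1 mulrA ba mul1r subrr. Qed.

Lemma isometry_compl_idem : (1 - a * b) * (1 - a * b) = 1 - a * b.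
Proof. by rewrite [in LHS]mulrBr mulr1 mulrA isometry_complMl mul0r subr0. Qed.

End Isometry.

Lemma theta_factors_expand (R : nzRingType) (a d E1 E2 : R) :
  E1 * a = 0 -> d * E2 = 0 -> d * E1 = E1 * d ->
  (1 + (d - 1) * E1) * (1 + (a - 1) * E2) = (1 - E1) * (1 - E2) + E1 * d + a * E2.
Proof.
move=> E1a dE2 dE1.
have E1E2 : E1 * (1 + (a - 1) * E2) = E1 * (1 - E2).
  by rewrite mulrDr mulr1 mulrA mulrBr E1a mulr1 sub0r mulNr mulrBr mulr1.
have dE : d * (E1 * (1 - E2)) = E1 * d.
  by rewrite mulrA dE1 -mulrA mulrBr mulr1 dE2 subr0.
rewrite mulrDl mul1r -mulrA E1E2 [(d - 1) * _]mulrBl mul1r dE.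
rewrite (mulrBl E2) mul1r (mulrBl (1 - E2)) mul1r.
by rewrite [LHS](AC ((1*2)*2) (1*3*5*4*2)).
Qed.

Lemma theta_factors_isometry (R : nzRingType) (a b c d : R) :
  b * a = 1 -> d * c = 1 ->
  GRing.comm c b -> GRing.comm a d -> GRing.comm d b ->
  (1 + (d - 1) * (1 - a * b)) * (1 + (a - 1) * (1 - c * d)) =
  a * c * b * d + (1 - a * b) * d + a * (1 - c * d).
Proof.
move=> ba dc cb ad db.
have dE1 : d * (1 - a * b) = (1 - a * b) * d.
  by apply: commrB; [exact: commr1 | apply: commrM; [exact: commr_sym | ]].
have -> : a * c * b * d = (1 - (1 - a * b)) * (1 - (1 - c * d)).
  by rewrite !subKr -!mulrA (mulrA c) cb -!mulrA.
exact: theta_factors_expand (isometry_complMl ba) (isometry_complMr dc) dE1.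
Qed.

Section Corner.
Variables (R : nzRingType) (p : R).
Hypothesis pp : p * p = p.

Definition corner1 (r : R) := 1 - p + p * r.

Lemma corner1M r s : GRing.comm p r -> corner1 r * corner1 s = corner1 (r * s).
Proof.
move=> pr.
have qq : (1 - p) * (1 - p) = 1 - p by rewrite mulrBr mulr1 mulrBl mul1r pp subrr subr0.
have qp : (1 - p) * p = 0 by rewrite mulrBl mul1r pp subrr.
have prq : p * r * (1 - p) = 0 by rewrite mulrBr mulr1 -mulrA -pr mulrA pp subrr.
rewrite /corner1 mulrDl (mulrDr (1 - p)) (mulrDr (p * r)) qq.
rewrite (mulrA (1 - p)) qp mul0r addr0 prq add0r.
by rewrite mulrA -(mulrA p) -pr mulrA pp mulrA.
Qed.

Lemma corner1_1 : corner1 1 = 1.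
Proof. by rewrite /corner1 mulr1 subrK. Qed.

Lemma corner1_subr1 r : corner1 r - 1 = p * (r - 1).
Proof. by rewrite /corner1 mulrBr mulr1 addrAC [1 - p - 1]addrAC subrr add0r addrC. Qed.

Lemma subr1_corner1 r : 1 - corner1 r = p * (1 - r).
Proof. by rewrite -opprB corner1_subr1 -mulrN opprB. Qed.

Lemma corner1_comm r s :
  GRing.comm p r -> GRing.comm p s -> GRing.comm r s ->
  GRing.comm (corner1 r) (corner1 s).
Proof. by move=> pr ps rs; rewrite /GRing.comm !corner1M // rs. Qed.

Lemma corner1_isometry a b : GRing.comm p b -> b * a = 1 -> corner1 b * corner1 a = 1.
Proof. by move=> pb ba; rewrite corner1M // ba corner1_1. Qed.

Lemma corner1_isometry_factor r a b : GRing.comm p r -> GRing.comm p a ->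
  (corner1 r - 1) * (1 - corner1 a * corner1 b) = (r - 1) * (p * (1 - a * b)).
Proof.
move=> pr pa; have pr1 : GRing.comm p (r - 1) by apply: commrB => //; apply: commr1.
by rewrite corner1M // subr1_corner1 corner1_subr1 pr1 -mulrA (mulrA p) pp.
Qed.

End Corner.

Section ElementaryGroup.
Variable R : nzRingType.

Lemma in_E_1 N : in_E (1%:M : 'M[R]_N).
Proof. by exists [::]. Qed.

Lemma in_E_mul N (M1 M2 : 'M[R]_N) : in_E M1 -> in_E M2 -> in_E (M1 *m M2).
Proof.
move=> [s1 [s1E ->]] [s2 [s2E ->]]; exists (s1 ++ s2).
rewrite all_cat s1E s2E foldr_cat; split=> //.
by elim: s1 {s1E} => [|t s1 IH] /=; rewrite ?mul1mx // -mulmxA IH.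
Qed.

Lemma elem_mxE N (k l : 'I_N) (a : R) : elem_mx k l a = 1%:M + a *: delta_mx k l.
Proof.
apply/matrixP=> p q; rewrite !mxE; congr (_ + _).
by case: (_ && _); rewrite ?mulr1 ?mulr0.
Qed.

Lemma in_E_elem N (k l : 'I_N) (a : R) : k != l -> in_E (elem_mx k l a).
Proof. by move=> kl; exists [:: (k, l, a)]; rewrite /= mulmx1 kl. Qed.

Lemma matrix_add_ind m n (P : 'M[R]_(m, n) -> Prop) :
  P 0 -> (forall A B, P A -> P B -> P (A + B)) ->
  (forall i j a, P (a *: delta_mx i j)) -> forall A, P A.
Proof.
move=> P0 PD Pd A; rewrite (matrix_sum_delta A).
by elim/big_ind: _ => // i _; elim/big_ind: _.
Qed.

Lemma elem_mx_block_upper n (i j : 'I_n) (a : R) :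
  elem_mx (lshift n i) (rshift n j) a = block_mx 1%:M (a *: delta_mx i j) 0 1%:M.
Proof.
rewrite elem_mxE delta_mx_ushift delta_mx_rshift -row_mx0 -block_mxEv.
by rewrite (scalar_mx_block n n) scale_block_mx add_block_mx !scaler0 !addr0 add0r.
Qed.

Lemma elem_mx_block_lower n (i j : 'I_n) (a : R) :
  elem_mx (rshift n i) (lshift n j) a = block_mx 1%:M 0 (a *: delta_mx i j) 1%:M.
Proof.
rewrite elem_mxE delta_mx_dshift delta_mx_lshift -row_mx0 -block_mxEv.
by rewrite (scalar_mx_block n n) scale_block_mx add_block_mx !scaler0 !addr0 add0r.
Qed.

Lemma in_E_block_upper n (Z : 'M[R]_n) : in_E (block_mx 1%:M Z 0 1%:M).
Proof.
elim/matrix_add_ind: Z => [|Z1 Z2 h1 h2|i j a].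
- by rewrite -scalar_mx_block; apply: in_E_1.
- have := in_E_mul h2 h1.
  by rewrite mulmx_block !(mulmx0, mul0mx, mulmx1, mul1mx, addr0, add0r).
- by rewrite -elem_mx_block_upper; apply: in_E_elem; rewrite eq_lrshift.
Qed.

Lemma in_E_block_lower n (Z : 'M[R]_n) : in_E (block_mx 1%:M 0 Z 1%:M).
Proof.
elim/matrix_add_ind: Z => [|Z1 Z2 h1 h2|i j a].
- by rewrite -scalar_mx_block; apply: in_E_1.
- have := in_E_mul h1 h2.
  by rewrite mulmx_block !(mulmx0, mul0mx, mulmx1, mul1mx, addr0, add0r).
- by rewrite -elem_mx_block_lower; apply: in_E_elem; rewrite eq_rlshift.
Qed.

(* Whitehead: with w(U) = [[0, U], [-U^-1, 0]], a product of three unipotent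
   blocks, diag(Z, Z^-1) = w(Z) w(-1). *)
Lemma in_E_block_diag n (Z Z' : 'M[R]_n) :
  Z *m Z' = 1%:M -> Z' *m Z = 1%:M -> in_E (block_mx Z 0 0 Z').
Proof.
move=> ZZ' Z'Z.
have -> : block_mx Z 0 0 Z' =
  block_mx 1%:M Z 0 1%:M *m block_mx 1%:M 0 (- Z') 1%:M *m block_mx 1%:M Z 0 1%:M
  *m (block_mx 1%:M (- 1%:M) 0 1%:M *m block_mx 1%:M 0 1%:M 1%:M
      *m block_mx 1%:M (- 1%:M) 0 1%:M).
  by rewrite !mulmx_block ?(mulmx0, mul0mx, mul1mx, mulmx1, mulNmx, mulmxN, ZZ', Z'Z,
    subrr, addNr, add0r, addr0, oppr0, opprK).
by repeat apply: in_E_mul; first [apply: in_E_block_upper | apply: in_E_block_lower].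
Qed.

Lemma in_E_block_commutator n (U U' V V' : 'M[R]_n) :
  U *m U' = 1%:M -> U' *m U = 1%:M -> V *m V' = 1%:M -> V' *m V = 1%:M ->
  in_E (block_mx (U *m V *m (U' *m V')) 0 0 (1%:M : 'M_n)).
Proof.
move=> UU' U'U VV' V'V.
have UV_inv : U' *m V' *m (V *m U) = 1%:M.
  by rewrite mulmxA -(mulmxA U') V'V mulmx1 U'U.
have UV_inv' : V *m U *m (U' *m V') = 1%:M.
  by rewrite mulmxA -(mulmxA V) UU' mulmx1 VV'.
have := in_E_mul (in_E_mul (in_E_block_diag UU' U'U) (in_E_block_diag VV' V'V))
                 (in_E_block_diag UV_inv UV_inv').
by rewrite !mulmx_block ?(mulmx0, mul0mx, addr0, add0r) UV_inv.
Qed.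

End ElementaryGroup.

Section ThreeByThree.
Variable R : nzRingType.

Definition mx3 (a b c d e f g h k : R) : 'M[R]_3 :=
  \matrix_(i < 3, j < 3)
    nth 0 (nth [::] [:: [:: a; b; c]; [:: d; e; f]; [:: g; h; k]] i) j.

Lemma mx3_mul a1 a2 a3 a4 a5 a6 a7 a8 a9 b1 b2 b3 b4 b5 b6 b7 b8 b9 :
  mx3 a1 a2 a3 a4 a5 a6 a7 a8 a9 *m mx3 b1 b2 b3 b4 b5 b6 b7 b8 b9 =
  mx3 (a1*b1 + a2*b4 + a3*b7) (a1*b2 + a2*b5 + a3*b8) (a1*b3 + a2*b6 + a3*b9)
      (a4*b1 + a5*b4 + a6*b7) (a4*b2 + a5*b5 + a6*b8) (a4*b3 + a5*b6 + a6*b9)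
      (a7*b1 + a8*b4 + a9*b7) (a7*b2 + a8*b5 + a9*b8) (a7*b3 + a8*b6 + a9*b9).
Proof.
apply/matrixP=> i j; rewrite !mxE !big_ord_recl big_ord0 !mxE addr0 /=.
by case: i => [[|[|[|//]]] ?]; case: j => [[|[|[|//]]] ?]; rewrite /= ?addrA.
Qed.

Lemma mx3_1 : mx3 1 0 0 0 1 0 0 0 1 = 1%:M.
Proof.
apply/matrixP=> i j; rewrite !mxE.
by case: i => [[|[|[|//]]] ?]; case: j => [[|[|[|//]]] ?].
Qed.

Lemma block_mx3_diag1 (c : R) :
  block_mx (mx3 c 0 0 0 1 0 0 0 1) 0 0 1%:M = diag1 5 c :> 'M_(3 + 3).
Proof.
apply/matrixP=> p q; rewrite -(splitK p) -(splitK q).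
by case: (split p) => p'; case: (split q) => q';
  rewrite ?block_mxEul ?block_mxEur ?block_mxEdl ?block_mxEdr !mxE;
  case: p' => [[|[|[|//]]] ?]; case: q' => [[|[|[|//]]] ?].
Qed.

End ThreeByThree.

Section Commutator.
Variable R : nzRingType.

(* H_k = [[a_k, 1 - a_k b_k], [0, b_k]] is a unit with inverse
   [[b_k, 0], [1 - a_k b_k, a_k]]; embedding H_1 and H_2 in the coordinates
   {0, 1} and {0, 2} of a 3x3 matrix, their commutator is diag(c, 1, 1). *)
Lemma in_E_isometry_commutator (a1 b1 a2 b2 : R) :
  b1 * a1 = 1 -> b2 * a2 = 1 ->
  in_E (diag1 5 (a1 * a2 * b1 * b2 + (1 - a1 * b1) * b2 + a1 * (1 - a2 * b2))).
Proof.
move=> ba1 ba2.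
pose e1 := 1 - a1 * b1; pose e2 := 1 - a2 * b2.
have e1a1 : e1 * a1 = 0 := isometry_complMl ba1.
have e2a2 : e2 * a2 = 0 := isometry_complMl ba2.
have b1e1 : b1 * e1 = 0 := isometry_complMr ba1.
have b2e2 : b2 * e2 = 0 := isometry_complMr ba2.
have e1e1 : e1 * e1 = e1 := isometry_compl_idem ba1.
have e2e2 : e2 * e2 = e2 := isometry_compl_idem ba2.
have ab1 : a1 * b1 + e1 * e1 = 1 by rewrite e1e1 addrC subrK.
have ab2 : a2 * b2 + e2 * e2 = 1 by rewrite e2e2 addrC subrK.
pose H1 := mx3 a1 e1 0 0 b1 0 0 0 1; pose H1' := mx3 b1 0 0 e1 a1 0 0 0 1.
pose H2 := mx3 a2 0 e2 0 1 0 0 0 b2; pose H2' := mx3 b2 0 0 0 1 0 e2 0 a2.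
have HH1 : H1 *m H1' = 1%:M.
  by rewrite -mx3_1 mx3_mul !(mulr0, mul0r, addr0, add0r, mulr1, mul1r) e1a1 b1e1 ba1 ab1.
have HH1' : H1' *m H1 = 1%:M.
  by rewrite -mx3_1 mx3_mul !(mulr0, mul0r, addr0, add0r, mulr1, mul1r) e1a1 b1e1 ba1 addrC ab1.
have HH2 : H2 *m H2' = 1%:M.
  by rewrite -mx3_1 mx3_mul !(mulr0, mul0r, addr0, add0r, mulr1, mul1r) e2a2 b2e2 ba2 ab2.
have HH2' : H2' *m H2 = 1%:M.
  by rewrite -mx3_1 mx3_mul !(mulr0, mul0r, addr0, add0r, mulr1, mul1r) e2a2 b2e2 ba2 addrC ab2.
have comm_H : H1 *m H2 *m (H1' *m H2') =
    mx3 (a1 * a2 * b1 * b2 + e1 * b2 + a1 * e2) 0 0 0 1 0 0 0 1.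
  rewrite !mx3_mul !(mulr0, mul0r, addr0, add0r, mulr1, mul1r) ?e1a1 ?b1e1 ?ba1 ?b2e2 ?ba2.
  by rewrite !mulrA e1e1 b1e1 mul0r -(mulrA a1 e2 e2) e2e2 -(mulrA a1 e2 a2) e2a2 mulr0.
by have := in_E_block_commutator HH1 HH1' HH2 HH2'; rewrite comm_H block_mx3_diag1.
Qed.

End Commutator.

Section JacobsonRelations.
Variables (R : nzRingType) (m : nat) (x y : 'I_m -> R).
Hypothesis jac : jacobson_rel x y.
Local Notation e := (jac_e x y).
Local Notation eI := (jac_eI x y).

Lemma jac_yx k : y k * x k = 1.
Proof. by case: jac. Qed.

Lemma jac_comm_xx k l : GRing.comm (x k) (x l).
Proof. by case: (eqVneq k l) => [-> //|kl]; case: jac => _ /(_ k l kl) []. Qed.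

Lemma jac_comm_yy k l : GRing.comm (y k) (y l).
Proof. by case: (eqVneq k l) => [-> //|kl]; case: jac => _ /(_ k l kl) []. Qed.

Lemma jac_comm_xy k l : k != l -> GRing.comm (x k) (y l).
Proof. by move=> kl; case: jac => _ /(_ k l kl) []. Qed.

Lemma jac_comm_x_e k l : k != l -> GRing.comm (x k) (e l).
Proof.
move=> kl; apply: commrB; first exact: commr1.
by apply: commrM; [exact: jac_comm_xx | exact: jac_comm_xy].
Qed.

Lemma jac_comm_y_e k l : k != l -> GRing.comm (y k) (e l).
Proof.
move=> kl; apply: commrB; first exact: commr1.
by apply: commrM; [apply/commr_sym/jac_comm_xy; rewrite eq_sym | exact: jac_comm_yy].
Qed.

Lemma jac_comm_e k l : GRing.comm (e k) (e l).
Proof.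
have [-> //|kl] := eqVneq k l; apply/commr_sym/commrB; first exact: commr1.
by apply: commrM; apply/commr_sym; [exact: jac_comm_x_e | exact: jac_comm_y_e].
Qed.

Lemma jac_eI_idem (S : {set 'I_m}) : eI S * eI S = eI S.
Proof.
rewrite -prodrM_comm => [|*]; last exact: jac_comm_e.
by apply: eq_bigr => k _; exact: isometry_compl_idem (jac_yx k).
Qed.

Lemma jac_eI_comm_x (S : {set 'I_m}) k : k \notin S -> GRing.comm (eI S) (x k).
Proof.
move=> kS; apply/commr_sym/commr_prod => l lS; apply: jac_comm_x_e.
by apply: contraNneq kS => ->.
Qed.

Lemma jac_eI_comm_y (S : {set 'I_m}) k : k \notin S -> GRing.comm (eI S) (y k).
Proof.
move=> kS; apply/commr_sym/commr_prod => l lS; apply: jac_comm_y_e.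
by apply: contraNneq kS => ->.
Qed.

Lemma jac_eI_setD1 (S : {set 'I_m}) k : k \in S -> eI S = eI (S :\ k) * e k.
Proof. by move=> kS; apply: prodr_setD1_comm kS _ => l; exact: jac_comm_e. Qed.

Lemma theta_corner1 (J : {set 'I_m}) i j : i \in J -> j \in J -> i != j ->
  let p := eI (J :\ i :\ j) in
  theta x y J i j =
    (1 + (corner1 p (y i) - 1) * (1 - corner1 p (x j) * corner1 p (y j))) *
    (1 + (corner1 p (x j) - 1) * (1 - corner1 p (x i) * corner1 p (y i))).
Proof.
move=> iJ jJ ij p.
have pp : p * p = p := jac_eI_idem _.
have iS : i \notin J :\ i :\ j by rewrite !in_setD1 eqxx andbF.
have jS : j \notin J :\ i :\ j by rewrite !in_setD1 eqxx.
rewrite /theta (jac_eI_setD1 (k := j)); last by rewrite in_setD1 eq_sym ij.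
rewrite (jac_eI_setD1 (S := J :\ j) (k := i)); last by rewrite in_setD1 ij.
rewrite [J :\ j :\ i]setDDl setUC -setDDl.
by rewrite !corner1_isometry_factor //; apply: jac_eI_comm_x || apply: jac_eI_comm_y.
Qed.

End JacobsonRelations.

Theorem theorem3p4 (K : fieldType) (m : nat) (A : algType K)
    (x y : 'I_m -> A) :
  (2 <= m)%N -> is_jacobson_algebra x y ->
  forall (J : {set 'I_m}) (i j : 'I_m),
    (2 <= #|J|)%N -> i \in J -> j \in J -> i != j ->
    diag_in_Einf (theta x y J i j).
Proof.
move=> _ [jac _] J i j _ iJ jJ ij; exists 5%N.
pose p := jac_eI x y (J :\ i :\ j).
have pp : p * p = p := jac_eI_idem jac _.
have iS : i \notin J :\ i :\ j by rewrite !in_setD1 eqxx andbF.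
have jS : j \notin J :\ i :\ j by rewrite !in_setD1 eqxx.
have [pxi pyi] := (jac_eI_comm_x jac iS, jac_eI_comm_y jac iS).
have [pxj pyj] := (jac_eI_comm_x jac jS, jac_eI_comm_y jac jS).
have ji : j != i by rewrite eq_sym.
rewrite (theta_corner1 jac iJ jJ ij) theta_factors_isometry.
- by apply: in_E_isometry_commutator; apply: corner1_isometry => //; apply: jac_yx.
- by apply: corner1_isometry => //; apply: jac_yx.
- by apply: corner1_isometry => //; apply: jac_yx.
- by apply: corner1_comm => //; apply: jac_comm_xy.
- by apply: corner1_comm => //; apply: jac_comm_xy.
- exact: corner1_comm (jac_comm_yy jac i j).
Qed.
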